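(* Let $J$ be a lex-segment ideal in $R=k[x_1,x_2,x_3]$ with $\dim_k (R/J)_i=h_i$ for every $i\ge 0$. Then for every $i\ge0$, $$\dim_k\left((J:x_3)/J\right)_{i}=h_{i}-h_{i+1}+(h_{i+1})^{-}.$$
   Context: A lex-segment ideal $J$ is a monomial ideal such that for each degree $t$, $J_t$ is spanned by the $\dim_k J_t$ largest monomials of degree $t$ in the lexicographic order with $x_1>x_2>x_3$. For positive integers $h,i$ write uniquely $h=\binom{m_i}{i}+\binom{m_{i-1}}{i-1}+\cdots+\binom{m_j}{j}$ with $m_i>\cdots>m_j\ge j\ge1$, and set $(h)^-=\binom{m_i-1}{i}+\cdots+\binom{m_j-1}{j}$; $(h_{i+1})^-$ is computed with respect to $i+1$, and $(0)^-=0$. *)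

From mathcomp Require Import all_boot all_order all_algebra.
Set Implicit Arguments. Unset Strict Implicit. Unset Printing Implicit Defensive.

(* A monomial x1^a x2^b x3^c of k[x1,x2,x3] is its exponent triple (a,b,c). *)
Definition mon := (nat * nat * nat)%type.
Definition e1 (m : mon) : nat := m.1.1.
Definition e2 (m : mon) : nat := m.1.2.
Definition e3 (m : mon) : nat := m.2.
Definition mdeg (m : mon) : nat := e1 m + e2 m + e3 m.

Definition mulx1 (m : mon) : mon := ((e1 m).+1, e2 m, e3 m).
Definition mulx2 (m : mon) : mon := (e1 m, (e2 m).+1, e3 m).
Definition mulx3 (m : mon) : mon := (e1 m, e2 m, (e3 m).+1).

(* All monomials of degree t (each exactly once): a k-basis of R_t. *)
Definition mons (t : nat) : seq mon :=
  [seq (a, b, t - a - b) | a <- iota 0 t.+1, b <- iota 0 (t - a).+1].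

Definition lex_gt (m m' : mon) : bool :=
  (e1 m > e1 m') ||
  ((e1 m == e1 m') && ((e2 m > e2 m') || ((e2 m == e2 m') && (e3 m > e3 m')))).

(* A monomial ideal J is given by the set of monomials it contains;
   it is closed under multiplication by the variables. *)
Definition monomial_ideal (J : pred mon) : Prop :=
  forall m, J m -> [/\ J (mulx1 m), J (mulx2 m) & J (mulx3 m)].

Definition lex_segment_ideal (J : pred mon) : Prop :=
  monomial_ideal J /\
  forall m m', mdeg m = mdeg m' -> lex_gt m' m -> J m -> J m'.

Definition quot_dim (J : pred mon) (t : nat) : nat :=
  count (fun m => ~~ J m) (mons t).

(* dim_k ((J : x3)/J)_t: monomials u of degree t with x3 u in J, u notin J. *)
Definition colon_quot_dim (J : pred mon) (t : nat) : nat :=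
  count (fun m => J (mulx3 m) && ~~ J m) (mons t).

Fixpoint max_below (P : pred nat) (n : nat) : nat :=
  match n with
  | 0 => 0
  | n'.+1 => if P n' then n' else max_below P n'
  end.

(* (h)^- with respect to i, via the (greedy) Macaulay representation
   h = C(m_i,i) + C(m_{i-1},i-1) + ... + C(m_j,j), m_i > ... > m_j >= j >= 1:
   m_i is the largest m with C(m,i) <= h. (0)^- = 0. *)
Fixpoint mac_minus (i h : nat) : nat :=
  match i with
  | 0 => 0
  | i'.+1 =>
      if h == 0 then 0 else
      let m := max_below (fun m => 'C(m, i) <= h) (h + i + 1) in
      'C(m.-1, i) + mac_minus i' (h - 'C(m, i))
  end.

Example mm1 : mac_minus 1 5 = 4. Proof. by vm_compute. Qed.
Example mm2 : mac_minus 2 5 = 2. Proof. by vm_compute. Qed. (* 5 = C(3,2)+C(2,1) -> C(2,2)+C(1,1)=2 *)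
Example mm3 : mac_minus 3 7 = 2. Proof. by vm_compute. Qed. (* 7 = C(4,3)+C(3,2) -> C(3,3)+C(2,2) *)
Example mons2 : size (mons 2) = 6. Proof. by []. Qed.

From mathcomp Require Import all_boot all_order all_algebra.
From mathcomp Require Import zify.

Set Implicit Arguments.
Unset Strict Implicit.
Unset Printing Implicit Defensive.

(* In degree d the monomials outside a lex-segment ideal J are exactly those
   lex-smaller than x1^k x2^r x3^(d-k-r), for some k <= d+1 and r <= d-k.  Hence
   h_d = sum_(a<k) (d+1-a) + r = sum_(j<k) C(d+1-j, d-j) + sum_(j<r) C(d-k-j, d-k-j),
   which is the Macaulay representation of h_d (for k = d+1 it is the single term
   C(d+2, d)), so (h_d)^- = k.  Multiplication by
   x3 identifies R_(d-1) with the monomials of degree d divisible by x3; the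
   monomials of degree d outside J not divisible by x3 are x1^a x2^(d-a) for a < k.
   So exactly h_d - k monomials u of degree d-1 satisfy x3 u \notin J, and the
   other h_(d-1) - (h_d - k) monomials outside J span ((J : x3)/J)_(d-1). *)

Definition lex_below (k r : nat) : pred mon :=
  fun m => (e1 m < k) || (e1 m == k) && (e2 m < r).

Definition stair (d k : nat) : nat := \sum_(0 <= a < k) (d.+1 - a).

Lemma upward_threshold (P : pred nat) n :
  (forall a a', a <= a' < n -> P a -> P a') ->
  exists2 k, k <= n & forall a, a < n -> P a = (k <= a).
Proof.
move=> Pup; pose k := find P (iota 0 n).
have kn : k <= n by rewrite -[n in _ <= n](size_iota 0) find_size.
exists k => // a an; have [ak|ka] := ltnP a k.
  by have := before_find 0 ak; rewrite nth_iota ?add0n // => ->.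
have Pk : P k.
  have /(nth_find 0) : has P (iota 0 n) by rewrite has_find size_iota; lia.
  by rewrite nth_iota ?add0n //; lia.
by apply: Pup Pk; rewrite ka.
Qed.

Section LexSegment.

Variable J : pred mon.
Hypothesis hJ : lex_segment_ideal J.

Lemma lex_segment_le m m' : mdeg m = mdeg m' ->
  (e1 m < e1 m') || (e1 m == e1 m') && (e2 m <= e2 m') -> J m -> J m'.
Proof.
case: m m' => [[a b] c] [[a' b'] c']; rewrite /mdeg /e1 /e2 /e3 /= => deg le Jm.
have [/andP[/eqP ea /eqP eb]|neq] := boolP ((a == a') && (b == b')).
  by rewrite -ea -eb (_ : c' = c) //; lia.
apply: hJ.2 Jm => //; rewrite /lex_gt /e1 /e2 /e3 /=; lia.
Qed.

Lemma lex_segment_staircase d : exists k r, [/\ k <= d.+1, r <= d - k &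
  forall m, mdeg m = d -> ~~ J m = lex_below k r m].
Proof.
have [a a' aa'|k kd Jtop] := @upward_threshold (fun a => J (a, d - a, 0)) d.+1.
  by apply: lex_segment_le; rewrite /mdeg /e1 /e2 /=; lia.
have below_top a b c : a + b + c = d -> a < k -> ~~ J (a, b, c).
  move=> deg ak; apply: contraTN ak => Jm; rewrite -leqNgt -Jtop; last lia.
  by apply: lex_segment_le Jm; rewrite /mdeg /e1 /e2 /=; lia.
have [kd1|kd1] := eqVneq k d.+1.
  exists k, 0; split=> [||[[a b] c]]; rewrite ?kd1 // /mdeg /lex_below /e1 /e2 /e3 /= => deg.
  have ad : a < d.+1 by lia.
  by rewrite ltn0 andbF orbF ad below_top ?kd1.
have Jk : J (k, d - k, 0) by rewrite Jtop; lia.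
have [b b' bb'|r rd Jmid] :=
  @upward_threshold (fun b => J (k, b, d - k - b)) (d - k).+1.
  by apply: lex_segment_le; rewrite /mdeg /e1 /e2 /=; lia.
have rdk : r <= d - k by rewrite -Jmid ?subnn.
exists k, r; split=> [||[[a b] c]]; rewrite // /mdeg /lex_below /e1 /e2 /e3 /= => deg.
have [ak|ka] := ltnP a k; first by rewrite below_top.
have [eak|nak] := eqVneq a k.
  subst a; rewrite /=.
  have -> : c = d - k - b by lia.
  by rewrite ltnNge -Jmid //; lia.
by rewrite /= (@lex_segment_le (k, d - k, 0)) // /mdeg /e1 /e2 /=; lia.
Qed.

End LexSegment.

Lemma mem_mons m t : (m \in mons t) = (mdeg m == t).
Proof.
case: m => [[a b] c]; rewrite /mdeg /e1 /e2 /e3 /=.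
apply/allpairsPdep/eqP => [[a' [b' [a't b't [-> -> ->]]]]|deg].
  by move: a't b't; rewrite !mem_iota; lia.
have ct : c = t - a - b by lia.
by exists a, b; rewrite !mem_iota ct; split => //; lia.
Qed.

Lemma count_mons (P : pred mon) t : count P (mons t) =
  \sum_(0 <= a < t.+1) count (fun b => P (a, b, t - a - b)) (iota 0 (t - a).+1).
Proof.
by rewrite count_flatten sumnE !big_map /index_iota subn0; under eq_bigr do rewrite count_map.
Qed.

Lemma count_monsS (P : pred mon) t : count P (mons t.+1) =
  count (P \o mulx3) (mons t) + \sum_(0 <= a < t.+2) P (a, t.+1 - a, 0).
Proof.
rewrite !count_mons big_nat_recr // [\sum_(0 <= a < t.+2) _]big_nat_recr // addnA -big_split.
apply: (congr2 addn); last by rewrite subnn /= addn0.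
apply: eq_big_nat => a /andP[_ at1].
rewrite subSn // -[(t - a).+2]addn1 iotaD count_cat.
apply: (congr2 addn); last by rewrite /= add0n subnn addn0.
apply: eq_in_count => b; rewrite mem_iota => /andP[_ bta].
by rewrite /mulx3 /e1 /e2 /e3 /= (_ : (t - a).+1 - b = (t - a - b).+1) //; lia.
Qed.

Lemma count_ltn_iota r n : r <= n -> count (fun b => b < r) (iota 0 n) = r.
Proof. by move=> rn; rewrite -size_filter (filter_iota_ltn 0 rn) size_iota. Qed.

Lemma sum_ltn_nat k n : k <= n -> \sum_(0 <= a < n) (a < k) = k.
Proof.
move=> kn; rewrite -[RHS](count_ltn_iota kn) -sum1_count [RHS]big_mkcond.
by rewrite /index_iota subn0; apply: eq_bigr => a _; case: (a < k).
Qed.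

Lemma count_lex_below d k r : k <= d.+1 -> r <= d - k ->
  count (lex_below k r) (mons d) = stair d k + r.
Proof.
move=> kd rd; rewrite count_mons (big_cat_nat (leq0n k) kd).
apply: (congr2 addn).
  apply: eq_big_nat => a /andP[_ ak].
  rewrite (@eq_count _ _ predT) => [|b]; last by rewrite /lex_below /= ak.
  by rewrite count_predT size_iota; lia.
have [kd1|ltkd] := eqVneq k d.+1; first by rewrite kd1 big_geq //; lia.
rewrite big_ltn ?ltn_neqAle ?ltkd // big_nat_cond big1 => [|a /andP[/andP[ka _] _]].
  rewrite -[RHS]addn0; apply: (congr2 addn) => //.
  rewrite -[RHS](@count_ltn_iota r (d - k).+1) 1?ltnW //.
  by apply: eq_count => b; rewrite /lex_below /= ltnn eqxx.
rewrite (@eq_count _ _ pred0) ?count_pred0 // => b.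
by rewrite /lex_below /= ltnNge (ltnW ka) gtn_eqF.
Qed.

Lemma count_lex_belowS d k r : k <= d.+2 -> r <= d.+1 - k ->
  count (lex_below k r) (mons d.+1) = count (lex_below k r) (mons d) + k.
Proof.
move=> kd rd; rewrite count_monsS; congr (_ + _).
rewrite -[RHS](sum_ltn_nat kd); apply: eq_big_nat => a _.
by rewrite /lex_below /e1 /e2 /=; case: eqP => [->|_]; rewrite ?orbF // ltnn ltnNge rd.
Qed.

Lemma count_notin_split (J : pred mon) s : (forall m, J m -> J (mulx3 m)) ->
  count (fun m => ~~ J m) s =
  count (fun m => J (mulx3 m) && ~~ J m) s + count (fun m => ~~ J (mulx3 m)) s.
Proof.
move=> Jx3; elim: s => //= m s ->; move: (Jx3 m).
by case: (J m) (J (mulx3 m)) => [] [] /= x3; [lia | have := x3 isT | lia | lia].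
Qed.

Lemma stair0 d : stair d 0 = 0.
Proof. by rewrite /stair big_geq. Qed.

Lemma stairSS d k : stair d.+1 k.+1 = d.+2 + stair d k.
Proof. by rewrite /stair big_nat_recl // subn0. Qed.

Lemma stairS d k : stair d k.+1 = stair d k + (d.+1 - k).
Proof. by rewrite /stair big_nat_recr. Qed.

Lemma leq_stair d k k' : k <= k' -> stair d k <= stair d k'.
Proof. by move=> kk'; rewrite /stair (big_cat_nat (leq0n k) kk') leq_addr. Qed.

Lemma stair_full d : stair d d.+1 = 'C(d.+2, d).
Proof.
elim: d => [|d IH]; first by rewrite stairS stair0.
by rewrite stairSS IH binS binSn addnC.
Qed.

Lemma max_below_eq (P : pred nat) n m :
  m < n -> P m -> (forall m', m < m' < n -> ~~ P m') -> max_below P n = m.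
Proof.
elim: n => [//|n IH] mn Pm above /=.
have [<-|nm] := eqVneq m n; first by rewrite Pm.
have mn' : m < n by rewrite ltn_neqAle nm -ltnS.
rewrite (negbTE (above n _)); last by rewrite mn' ltnSn.
apply: IH => // m' /andP[mm' m'n].
by apply: above; rewrite mm' ltnW.
Qed.

Lemma mac_minusS i h m : 0 < h -> m < h + i.+2 ->
  'C(m, i.+1) <= h < 'C(m.+1, i.+1) ->
  mac_minus i.+1 h = 'C(m.-1, i.+1) + mac_minus i (h - 'C(m, i.+1)).
Proof.
move=> h0 mh /andP[lo hi]; rewrite /= (negbTE (lt0n_neq0 h0)) (@max_below_eq _ _ m) //.
  by rewrite addn1 -addnS.
by move=> m' /andP[mm' _]; rewrite -ltnNge (leq_trans hi) ?leq_bin2l.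
Qed.

Lemma mac_minus_small d h : h <= d -> mac_minus d h = 0.
Proof.
elim: d h => [|d IH] [|h] // hd.
by rewrite (@mac_minusS d h.+1 d.+1) ?binn ?binSn ?(bin_small (ltnSn d)) ?IH ?subn1 //; lia.
Qed.

Lemma mac_minus_stair_full d : mac_minus d.+1 (stair d.+1 d.+2) = d.+2.
Proof.
have C3 : 'C(d.+3, d.+1) = 'C(d.+2, d) + d.+2 by rewrite binS binSn addnC.
have C4 : 'C(d.+4, d.+1) = 'C(d.+3, d) + 'C(d.+3, d.+1) by rewrite binS addnC.
have C2pos : 0 < 'C(d.+2, d) by rewrite bin_gt0; lia.
have C3pos : 0 < 'C(d.+3, d) by rewrite bin_gt0; lia.
by rewrite stair_full (@mac_minusS d _ d.+3) ?binSn ?subnn ?mac_minus_small ?addn0 //; lia.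
Qed.

Lemma mac_minus_stairS d k r : k <= d -> r <= d - k ->
  mac_minus d.+1 (stair d.+1 k.+1 + r) = (mac_minus d (stair d k + r)).+1.
Proof.
move=> kd rd; have first_block : d.+2 <= stair d.+1 k.+1 by rewrite stairSS leq_addr.
have below_full : stair d.+1 k.+1 + r < stair d.+1 d.+2.
  by apply: leq_trans (leq_stair _ (_ : k.+2 <= d.+2)) => //; rewrite (stairS d.+1 k.+1); lia.
rewrite (@mac_minusS d _ d.+2) ?binn ?binSn -?stair_full; try lia.
by rewrite stairSS -addnA addKn.
Qed.

Lemma mac_minus_stair d k r : k <= d.+2 -> r <= d.+1 - k ->
  mac_minus d.+1 (stair d.+1 k + r) = k.
Proof.
elim: d k r => [|d IH] [|k] r kd rd; try by rewrite stair0 mac_minus_small.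
  case: k kd rd => [|[|//]] kd rd; first exact: mac_minus_stairS.
  by rewrite (_ : r = 0) ?addn0 ?mac_minus_stair_full //; lia.
have [kd2|ltkd] := eqVneq k d.+2.
  by rewrite kd2 (_ : r = 0) ?addn0 ?mac_minus_stair_full //; lia.
by rewrite mac_minus_stairS ?IH //; lia.
Qed.

Theorem lemma4p2 (J : pred mon) (h : nat -> nat)
  (hJ : lex_segment_ideal J) (hh : forall i, quot_dim J i = h i) :
  forall i : nat,
    (Posz (colon_quot_dim J i) =
      Posz (h i) - Posz (h i.+1) + Posz (mac_minus i.+1 (h i.+1)))%R.
Proof.
move=> i; have [k [r [kd rd notinJ]]] := lex_segment_staircase hJ i.+1.
have h_next : h i.+1 = count (lex_below k r) (mons i.+1).
  by rewrite -hh; apply: eq_in_count => m; rewrite mem_mons => /eqP /notinJ.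
have h_cur : h i = colon_quot_dim J i + count (lex_below k r) (mons i).
  have Jx3 m : J m -> J (mulx3 m) by case/(hJ.1 m).
  rewrite -hh /quot_dim (count_notin_split _ Jx3); congr (_ + _).
  apply: eq_in_count => m; rewrite mem_mons => /eqP deg.
  by rewrite /= notinJ // /mdeg /mulx3 /e1 /e2 /e3 /= -deg /mdeg addnS.
have mac_next : mac_minus i.+1 (h i.+1) = k.
  by rewrite h_next count_lex_below // mac_minus_stair.
rewrite mac_next h_cur h_next count_lex_belowS // !PoszD; lia.
Qed.
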